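(* If $Z=\{x_{A_1,i_1},x_{A_2,i_2},\dots,x_{A_n,i_n}\}$ is a sufficient subset of $Q_n$, then $i_1,i_2,\dots,i_n$ are pairwise distinct.
   Context: Fix a field $k$. $Q_n$ is the associative unital $k$-algebra with generators $x_{A,i}$ ($A\subseteq\{1,\dots,n\}$, $i\notin A$), called pseudo-roots, subject to $x_{A\cup\{i\},j}+x_{A,i}=x_{A\cup\{j\},i}+x_{A,j}$ and $x_{A\cup\{i\},j}\,x_{A,i}=x_{A\cup\{j\},i}\,x_{A,j}$ for all $A$ and $i\ne j$, $i,j\notin A$. With $t$ central, $\mathcal P(t)=(t-x_{A_n,i_n})\cdots(t-x_{A_1,i_1})$ for an ordering $(i_1,\dots,i_n)$ of $\{1,\dots,n\}$ and $A_k=\{i_1,\dots,i_{k-1}\}$ (independent of the ordering). A set $Y$ of pseudo-roots is defining if $\mathcal P(t)=(t-y_n)\cdots(t-y_1)$ with all $y_k\in Y$. The pseudo-root $x_{A,i}$ corresponds to an edge with tail $A\cup\{i\}$ and head $A$. For distinct pseudo-roots $x_{A,i},x_{B,j}$ with $A=B$, $\xi$ is obtained from the ordered pair by the $u$-operation if $(x_{A,i}-x_{B,j})x_{A,i}=\xi(x_{A,i}-x_{B,j})$; for distinct pseudo-roots with $A\cup\{i\}=B\cup\{j\}$, $\eta$ is obtained by the $d$-operation if $(x_{A,i}-x_{B,j})\eta=x_{A,i}(x_{A,i}-x_{B,j})$. The $du$-envelope of a set $Z$ of pseudo-roots is the set of pseudo-roots obtained from $Z$ by successive $d$- and $u$-operations;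 $Z$ is sufficient if its $du$-envelope contains a defining set. *)

From HB Require Import structures.
From mathcomp Require Import all_boot all_order all_algebra.
Set Implicit Arguments. Unset Strict Implicit. Unset Printing Implicit Defensive.
Import GRing.Theory.
Local Open Scope ring_scope.

(* A label of a potential pseudo-root x_{A,i}: the pair (A, i), A ⊆ {1..n},
   i ∈ {1..n}, indices written 0..n-1 via 'I_n. *)
Definition pr (n : nat) : finType := ({set 'I_n} * 'I_n)%type.

(* (A, i) is a pseudo-root label iff i ∉ A. *)
Definition valid n (p : pr n) : bool := p.2 \notin p.1.

Definition Qrel (k : fieldType) n (R : algType k) (x : pr n -> R) : Prop :=
  forall (A : {set 'I_n}) (i j : 'I_n), i != j -> i \notin A -> j \notin A ->
    x (i |: A, j) + x (A, i) = x (j |: A, i) + x (A, j) /\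
    x (i |: A, j) * x (A, i) = x (j |: A, i) * x (A, j).

(* Q_n is the k-algebra presented by the generators x_{A,i} and the relations
   above; an identity between (noncommutative) polynomial expressions in the
   generators holds in Q_n iff it holds for every assignment satisfying Qrel
   in every k-algebra (universal property of the presented algebra). *)

Definition u_op (k : fieldType) n (p q xi : pr n) : Prop :=
  forall (R : algType k) (x : pr n -> R), Qrel x ->
    (x p - x q) * x p = x xi * (x p - x q).

Definition d_op (k : fieldType) n (p q eta : pr n) : Prop :=
  forall (R : algType k) (x : pr n -> R), Qrel x ->
    (x p - x q) * x eta = x p * (x p - x q).

Inductive du_env (k : fieldType) n (Z : {set pr n}) : pr n -> Prop :=
| env_base p : p \in Z -> du_env k Z p
| env_u p q xi : du_env k Z p -> du_env k Z q -> p != q -> p.1 = q.1 ->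
    valid xi -> u_op k p q xi -> du_env k Z xi
| env_d p q eta : du_env k Z p -> du_env k Z q -> p != q ->
    p.2 |: p.1 = q.2 |: q.1 ->
    valid eta -> d_op k p q eta -> du_env k Z eta.

Definition rprod (R : nzRingType) n (x : pr n -> R) (y : 'I_n -> pr n)
  : {poly R} :=
  \prod_(l <- rev (enum 'I_n)) ('X - (x (y l))%:P).

Definition std_order n (l : 'I_n) : pr n := ([set j : 'I_n | j < l]%N, l).

Definition Ppoly (R : nzRingType) n (x : pr n -> R) : {poly R} :=
  rprod x (@std_order n).

Definition defining (k : fieldType) n (Y : {set pr n}) : Prop :=
  exists y : 'I_n -> pr n, (forall l, y l \in Y) /\
    forall (R : algType k) (x : pr n -> R), Qrel x -> rprod x y = Ppoly x.

Definition sufficient (k : fieldType) n (Z : {set pr n}) : Prop :=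
  exists Y : {set pr n}, (forall p, p \in Y -> du_env k Z p) /\ defining k Y.

From HB Require Import structures.
From mathcomp Require Import all_boot all_order all_algebra.
Set Implicit Arguments. Unset Strict Implicit. Unset Printing Implicit Defensive.
Import GRing.Theory.
Local Open Scope ring_scope.

(* Send every pseudo-root x_{A,i} to X^i in the commutative domain k[X]. The
   relations of Q_n hold there, and since X^i - X^j is regular for i != j,
   the u- and d-operations can only produce a pseudo-root with the same index
   i as their first argument: the envelope of Z uses only the indices of Z.
   On the other hand P(X^i) = 0 for every i, so in this model every defining
   set must contain a pseudo-root of each index. Hence the n elements of a
   sufficient Z carry all n indices, which are then pairwise distinct. *)

Lemma root_rprod (R : idomainType) n (x : pr n -> R) (y : 'I_n -> pr n) a :
  root (rprod x y) a = [exists l, a == x (y l)].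
Proof.
rewrite /root /rprod horner_prod prodf_seq_eq0.
apply/hasP/existsP => [[l _] | [l al]].
  by rewrite /= !hornerE subr_eq0 => al; exists l.
by exists l; rewrite ?mem_rev ?mem_enum //= !hornerE subr_eq0.
Qed.

Lemma pseudo_root_eq n (p q : pr n) :
  valid p -> valid q -> p.2 |: p.1 = q.2 |: q.1 -> p.2 = q.2 -> p = q.
Proof.
move=> vp vq tail_eq idx_eq; apply: injective_projections => //.
by rewrite -(setU1K vp) tail_eq idx_eq setU1K.
Qed.

Section IndexModel.
Variables (k : fieldType) (n : nat).

Definition index_model (p : pr n) : {poly k} := 'X^(val p.2).

Lemma index_model_Qrel : Qrel index_model.
Proof. by move=> A i j _ _ _; rewrite /index_model /= addrC mulrC. Qed.

Lemma index_model_eq (p q : pr n) :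
  (index_model p == index_model q) = (p.2 == q.2).
Proof.
rewrite /index_model; apply/eqP/eqP => [e | -> //]; apply: val_inj.
by have := congr1 (fun r : {poly k} => size r) e; rewrite !size_polyXn => -[].
Qed.

Lemma index_model_sub_neq0 (p q : pr n) :
  p.2 != q.2 -> index_model p - index_model q != 0.
Proof. by rewrite subr_eq0 index_model_eq. Qed.

Lemma u_op_index (p q xi : pr n) : p.2 != q.2 -> u_op k p q xi -> xi.2 = p.2.
Proof.
move=> pq /(_ _ _ index_model_Qrel); rewrite [LHS]mulrC.
by move/(mulIf (index_model_sub_neq0 pq))/eqP; rewrite index_model_eq => /eqP.
Qed.

Lemma d_op_index (p q eta : pr n) : p.2 != q.2 -> d_op k p q eta -> eta.2 = p.2.
Proof.
move=> pq /(_ _ _ index_model_Qrel); rewrite mulrC.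
by move/(mulIf (index_model_sub_neq0 pq))/eqP; rewrite index_model_eq => /eqP.
Qed.

Lemma defining_indices (Y : {set pr n}) :
  defining k Y -> forall i : 'I_n, exists2 p, p \in Y & p.2 = i.
Proof.
move=> [y [yY y_def]] i.
have : root (Ppoly index_model) (index_model (std_order i)).
  by rewrite root_rprod; apply/existsP; exists i.
rewrite -(y_def _ _ index_model_Qrel) root_rprod => /existsP [l].
by rewrite index_model_eq => /eqP i_yl; exists (y l).
Qed.

Section Envelope.
Variable Z : {set pr n}.
Hypothesis Z_valid : forall p, p \in Z -> valid p.

Lemma du_env_valid p : du_env k Z p -> valid p.
Proof. by case=> //; apply: Z_valid. Qed.

Lemma du_env_index p : du_env k Z p -> p.2 \in [set q.2 | q in Z].
Proof.
elim=> {p} [p pZ | p q xi _ p_idx _ _ pq head_eq _ /u_op_index u_idx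
               | p q eta Ep p_idx Eq _ pq tail_eq _ /d_op_index d_idx].
- exact: imset_f.
- rewrite u_idx //; apply: contra pq => /eqP idx_eq; apply/eqP.
  exact: injective_projections.
- rewrite d_idx //; apply: contra pq => /eqP idx_eq; apply/eqP.
  exact: pseudo_root_eq (du_env_valid Ep) (du_env_valid Eq) tail_eq idx_eq.
Qed.

Lemma sufficient_indices : sufficient k Z -> [set q.2 | q in Z] = setT.
Proof.
move=> [Y [Y_env Y_def]]; apply/setP => i; rewrite inE.
have [p pY <-] := defining_indices Y_def i.
exact: du_env_index (Y_env _ pY).
Qed.

End Envelope.
End IndexModel.

Theorem theorem1p4p5 (k : fieldType) (n : nat) (z : 'I_n -> pr n) :
  (forall l, valid (z l)) -> injective z ->
  sufficient k [set z l | l in 'I_n] ->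
  forall l m : 'I_n, l != m -> (z l).2 != (z m).2.
Proof.
move=> z_valid _ /sufficient_indices indices_full.
have Z_valid p : p \in [set z l | l in 'I_n] -> valid p.
  by case/imsetP => l' _ ->.
have /imset_injP idx_inj : #|[set (z l).2 | l in 'I_n]| == #|'I_n|.
  have -> : [set (z l).2 | l in 'I_n] = [set q.2 | q in [set z l | l in 'I_n]].
    by rewrite -imset_comp.
  by rewrite (indices_full Z_valid) cardsT.
move=> l m; apply: contra => /eqP idx_eq; apply/eqP.
exact: idx_inj.
Qed.
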